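(* Let $\Theta$ be a causal theory over $\mathfrak L$. Every sequent derivable in the sequent calculus $\mathbf{S}_\Theta$ has a derivation in $\mathbf{S}_\Theta$ that does not use the multicut rule.
   Context: $\mathfrak L$ is a classical propositional language (atoms, $\neg,\wedge,\vee,\to,\top,\perp$). A causal rule is $\phi\triangleright\psi$ with $\phi,\psi\in\mathfrak L$; a causal theory $\Theta$ is a set of causal rules. $\mathcal L_\Box$ is generated by $\mathfrak L$ and a unary operator $\Box$. The sequent calculus $\mathbf S_\Theta$ derives sequents $\Gamma\vdash_\Box\Delta$ with $\Gamma,\Delta$ collections of $\mathcal L_\Box$-formulas; derivations are well-founded, possibly infinitely branching trees. Its rules: axiom $p\vdash_\Box p$; $\perp\vdash_\Box$; $\vdash_\Box\top$; left and right weakening and contraction; the classical two-sided rules: $\neg$L (from $\Gamma\vdash_\Box p,\Delta$ infer $\Gamma,\neg p\vdash_\Box\Delta$), $\neg$R (from $\Gamma,p\vdash_\Box\Delta$ infer $\Gamma\vdash_\Box\neg p,\Delta$), $\wedge$L (from $\Gamma,p,q\vdash_\Box\Delta$ infer $\Gamma,p\wedge q\vdash_\Box\Delta$), $\wedge$R (from $\Gamma\vdash_\Box p,\Delta$ and $\Gamma\vdash_\Box q,\Delta$ infer $\Gamma\vdash_\Box p\wedge q,\Delta$), $\vee$L (from $\Gamma,p\vdash_\Box\Delta$ and $\Gamma,q\vdash_\Box\Delta$ infer $\Gamma,p\vee q\vdash_\Box\Delta$), $\vee$R (from $\Gamma\vdash_\Box p,q,\Delta$ infer $\Gamma\vdash_\Box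 p\vee q,\Delta$), $\to$L (from $\Gamma\vdash_\Box p,\Delta$ and $\Gamma,q\vdash_\Box\Delta$ infer $\Gamma,p\to q\vdash_\Box\Delta$), $\to$R (from $\Gamma,p\vdash_\Box q,\Delta$ infer $\Gamma\vdash_\Box p\to q,\Delta$); $\Box$R: if $\phi_1\triangleright\psi_1,\dots,\phi_k\triangleright\psi_k\in\Theta$ and $\psi_1,\dots,\psi_k\vdash_\Box p$ is derivable, then from $\Gamma\vdash_\Box\phi_1\wedge\dots\wedge\phi_k,\Delta$ infer $\Gamma\vdash_\Box\Box p,\Delta$ (empty conjunction $=\top$); $\Box$L: letting $\{S_j\}_{j\in J}$ be the family of all finite sets $S_j\subseteq\Theta$ such that $\{\psi:\phi\triangleright\psi\in S_j\}\vdash_\Box p$ is derivable ($J$ may be infinite), from the premises $\Gamma,\{\phi:\phi\triangleright\psi\in S_j\}\vdash_\Box\Delta$ for all $j\in J$ infer $\Gamma,\Box p\vdash_\Box\Delta$; multicut: from $\Gamma\vdash_\Box p^m,\Delta$ and $\Gamma',p^n\vdash_\Box\Delta'$ ($m,n>0$, $p^n$ meaning $n$ occurrences of $p$) infer $\Gamma,\Gamma'\vdash_\Box\Delta,\Delta'$. *)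

From Stdlib Require Import List Permutation.
Import ListNotations.

(* Formulas of L_Box: propositional atoms, connectives, and a unary Box
   (nesting allowed).  The classical language frak-L is the Box-free part. *)
Inductive form : Type :=
| Var : nat -> form
| Neg : form -> form
| And : form -> form -> form
| Or  : form -> form -> form
| Imp : form -> form -> form
| Top : form
| Bot : form
| Box : form -> form.

Fixpoint boxfree (f : form) : Prop :=
  match f with
  | Var _ | Top | Bot => True
  | Neg a => boxfree a
  | And a b | Or a b | Imp a b => boxfree a /\ boxfree b
  | Box _ => False
  end.

Definition causal_theory := form -> form -> Prop.

Definition is_causal_theory (Th : causal_theory) : Prop :=
  forall phi psi, Th phi psi -> boxfree phi /\ boxfree psi.

Fixpoint bigAnd (l : list form) : form :=
  match l with
  | [] => Top
  | [a] => a
  | a :: l' => And a (bigAnd l')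
  end.

(* Sequents are pairs of lists, read as
   multisets (rule [d_perm]).  [cut] says whether multicut is allowed.
   [SC ps p] is the side condition "ps |- p is derivable" used by the Box
   rules; in S_Theta it must coincide with derivability in S_Theta itself
   (see the theorem).  Derivations are well-founded, possibly infinitely
   branching (rule d_boxL quantifies over all finite S subset Theta). *)
Inductive Der (Th : causal_theory) (SC : list form -> form -> Prop) (cut : bool)
  : list form -> list form -> Prop :=
| d_perm : forall G G' D D', Permutation G G' -> Permutation D D' ->
    Der Th SC cut G D -> Der Th SC cut G' D'
| d_ax : forall p, Der Th SC cut [p] [p]
| d_bot : Der Th SC cut [Bot] []
| d_top : Der Th SC cut [] [Top]
| d_wL : forall G D p, Der Th SC cut G D -> Der Th SC cut (p :: G) D
| d_wR : forall G D p, Der Th SC cut G D -> Der Th SC cut G (p :: D)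
| d_cL : forall G D p, Der Th SC cut (p :: p :: G) D -> Der Th SC cut (p :: G) D
| d_cR : forall G D p, Der Th SC cut G (p :: p :: D) -> Der Th SC cut G (p :: D)
| d_negL : forall G D p, Der Th SC cut G (p :: D) -> Der Th SC cut (Neg p :: G) D
| d_negR : forall G D p, Der Th SC cut (p :: G) D -> Der Th SC cut G (Neg p :: D)
| d_andL : forall G D p q, Der Th SC cut (p :: q :: G) D ->
    Der Th SC cut (And p q :: G) D
| d_andR : forall G D p q, Der Th SC cut G (p :: D) -> Der Th SC cut G (q :: D) ->
    Der Th SC cut G (And p q :: D)
| d_orL : forall G D p q, Der Th SC cut (p :: G) D -> Der Th SC cut (q :: G) D ->
    Der Th SC cut (Or p q :: G) D
| d_orR : forall G D p q, Der Th SC cut G (p :: q :: D) ->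
    Der Th SC cut G (Or p q :: D)
| d_impL : forall G D p q, Der Th SC cut G (p :: D) -> Der Th SC cut (q :: G) D ->
    Der Th SC cut (Imp p q :: G) D
| d_impR : forall G D p q, Der Th SC cut (p :: G) (q :: D) ->
    Der Th SC cut G (Imp p q :: D)
| d_boxR : forall G D p (S : list (form * form)),
    (forall r, In r S -> Th (fst r) (snd r)) ->
    SC (map snd S) p ->
    Der Th SC cut G (bigAnd (map fst S) :: D) ->
    Der Th SC cut G (Box p :: D)
| d_boxL : forall G D p,
    (forall S : list (form * form), NoDup S ->
       (forall r, In r S -> Th (fst r) (snd r)) ->
       SC (map snd S) p ->
       Der Th SC cut (map fst S ++ G) D) ->
    Der Th SC cut (Box p :: G) D
| d_mcut : cut = true -> forall G D G' D' p m n, 0 < m -> 0 < n ->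
    Der Th SC cut G (repeat p m ++ D) -> Der Th SC cut (repeat p n ++ G') D' ->
    Der Th SC cut (G ++ G') (D ++ D').

From Stdlib Require Import List Permutation.
Import ListNotations.

(* Sequents are read as sets: by weakening, contraction and exchange, a
   derivation of G |- D transfers to any G' |- D' with G, D included in G', D'
   (Der_incl).  The heart of the proof is admissibility of the plain cut on a
   formula A, proved by induction on A with a cut-reduction order in which the
   immediate subformulas of a connective are below it and every Box-free
   formula is below every Box-formula (a cut on Box p reduces to a cut on the
   Box-free conjunction of antecedents of causal rules).  For a fixed A, assuming
   cut admissible on all its reducts:
   - principal_reduction: a right introduction of A cut against a left
     introduction of A yields the conclusion, by cuts on the reducts;
   - elim_left_occurrences: given the premises of a right introduction of A,
     all occurrences of A can be removed from the antecedent of any cut-free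
     derivation (induction on that derivation);
   - elim_right_occurrences: given a cut-free derivation of A, G' |- D',
     all occurrences of A can be removed from the succedent of any cut-free
     derivation (induction on it, using the previous lemma when A is
     introduced on the right). *)

Definition form_eq_dec : forall x y : form, {x = y} + {x <> y}.
Proof. decide equality; apply PeanoNat.Nat.eq_dec. Defined.

Definition pair_dec : forall x y : form * form, {x = y} + {x <> y}.
Proof. decide equality; apply form_eq_dec. Defined.

Definition rm (A : form) (l : list form) : list form :=
  filter (fun x => if form_eq_dec x A then false else true) l.
Arguments rm : simpl never.

Lemma rm_In A l x : In x (rm A l) <-> In x l /\ x <> A.
Proof. unfold rm; rewrite filter_In; destruct (form_eq_dec x A); intuition congruence. Qed.

Lemma In_map_nodup {X Y : Type} (dec : forall x y : X, {x = y} + {x <> y})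
  (f : X -> Y) (l : list X) (y : Y) : In y (map f (nodup dec l)) <-> In y (map f l).
Proof.
  rewrite !in_map_iff. split; intros [x [<- Hx]]; exists x;
    split; auto; apply (nodup_In dec); exact Hx.
Qed.

Lemma boxfree_bigAnd l : (forall x, In x l -> boxfree x) -> boxfree (bigAnd l).
Proof.
  induction l as [|a l IH]; intros H; simpl; auto.
  destruct l; simpl in *; auto.
Qed.

Section Structural.
Variables (Th : causal_theory) (SC : list form -> form -> Prop) (c : bool).
Local Notation der := (Der Th SC c).

Lemma weaken_app G D G' D' : der G D -> der (G' ++ G) (D' ++ D).
Proof.
  intro H. induction G' as [|a G' IH]; simpl.
  - induction D' as [|b D' IHD]; simpl; auto using d_wR.
  - apply d_wL; auto.
Qed.

Lemma contract_left_one a G D : In a G -> der (a :: G) D -> der G D.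
Proof.
  intros Ha H. destruct (in_split a G Ha) as (l1 & l2 & ->).
  apply (d_perm _ _ _ (a :: l1 ++ l2) _ D D);
    [apply Permutation_middle | apply Permutation_refl |].
  apply d_cL. eapply d_perm; [| apply Permutation_refl | exact H].
  apply perm_skip, Permutation_sym, Permutation_middle.
Qed.

Lemma contract_right_one a G D : In a D -> der G (a :: D) -> der G D.
Proof.
  intros Ha H. destruct (in_split a D Ha) as (l1 & l2 & ->).
  apply (d_perm _ _ _ G G (a :: l1 ++ l2));
    [apply Permutation_refl | apply Permutation_middle |].
  apply d_cR. eapply d_perm; [apply Permutation_refl | | exact H].
  apply perm_skip, Permutation_sym, Permutation_middle.
Qed.

Lemma contract_left L G D : incl L G -> der (L ++ G) D -> der G D.
Proof.
  induction L as [|a L IH]; simpl; intros HL H; auto.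
  apply IH; [intros x Hx; apply HL; right; exact Hx |].
  apply (contract_left_one a); auto.
  apply in_app_iff; right; apply HL; left; reflexivity.
Qed.

Lemma contract_right L G D : incl L D -> der G (L ++ D) -> der G D.
Proof.
  induction L as [|a L IH]; simpl; intros HL H; auto.
  apply IH; [intros x Hx; apply HL; right; exact Hx |].
  apply (contract_right_one a); auto.
  apply in_app_iff; right; apply HL; left; reflexivity.
Qed.

Lemma Der_incl G D G' D' : der G D -> incl G G' -> incl D D' -> der G' D'.
Proof.
  intros H HG HD.
  apply (contract_left G); auto. apply (contract_right D); auto.
  eapply d_perm; [apply Permutation_app_comm | apply Permutation_app_comm |].
  apply weaken_app; exact H.
Qed.

Lemma bigAnd_left L : forall G D, der (L ++ G) D -> der (bigAnd L :: G) D.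
Proof.
  induction L as [|a L IH]; intros G D H.
  - apply d_wL; exact H.
  - destruct L as [|b L']; [exact H |].
    change (bigAnd (a :: b :: L')) with (And a (bigAnd (b :: L'))).
    apply d_andL. eapply d_perm; [apply perm_swap | apply Permutation_refl |].
    apply IH. eapply d_perm; [apply Permutation_middle | apply Permutation_refl | exact H].
Qed.

End Structural.

Ltac solve_incl := unfold incl in *; let x := fresh "x" in let Hx := fresh "Hx" in
  intros x Hx; repeat progress (simpl in *; rewrite ?in_app_iff, ?rm_In in * );
  solve [intuition (subst; eauto using Permutation_in, Permutation_sym; try congruence)].

Ltac by_struct := match goal with
  H : Der _ _ _ _ _ |- _ => solve [eapply Der_incl; [exact H | solve_incl | solve_incl]]
  end.

Definition cut_admissible Th SC (B : form) : Prop := forall G D G2 D2,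
  Der Th SC false G (B :: D) -> Der Th SC false (B :: G2) D2 ->
  Der Th SC false (G ++ G2) (D ++ D2).

(* [cut_reduct A B]: a principal cut on A is reduced to cuts on B. *)
Definition cut_reduct (A B : form) : Prop :=
  match A with
  | Neg p => B = p
  | And p q | Or p q | Imp p q => B = p \/ B = q
  | Box _ => boxfree B
  | _ => False
  end.

Definition right_premises Th SC (A : form) (G D : list form) : Prop :=
  match A with
  | Neg p => Der Th SC false (p :: G) D
  | And p q => Der Th SC false G (p :: D) /\ Der Th SC false G (q :: D)
  | Or p q => Der Th SC false G (p :: q :: D)
  | Imp p q => Der Th SC false (p :: G) (q :: D)
  | Top => True
  | Box p => exists S, (forall r, In r S -> Th (fst r) (snd r)) /\ SC (map snd S) p /\
       Der Th SC false G (bigAnd (map fst S) :: D)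
  | _ => False
  end.

Definition left_premises Th SC (A : form) (G D : list form) : Prop :=
  match A with
  | Neg p => Der Th SC false G (p :: D)
  | And p q => Der Th SC false (p :: q :: G) D
  | Or p q => Der Th SC false (p :: G) D /\ Der Th SC false (q :: G) D
  | Imp p q => Der Th SC false G (p :: D) /\ Der Th SC false (q :: G) D
  | Bot => True
  | Box p => forall S : list (form * form), NoDup S ->
       (forall r, In r S -> Th (fst r) (snd r)) -> SC (map snd S) p ->
       Der Th SC false (map fst S ++ G) D
  | _ => False
  end.

Section CutElimination.
Variables (Th : causal_theory) (SC : list form -> form -> Prop).
Hypothesis causal : is_causal_theory Th.
Hypothesis SC_derivable : forall ps p, SC ps p <-> Der Th SC true ps (p :: nil).
Local Notation cf := (Der Th SC false).

Lemma right_intro A G D : right_premises Th SC A G D -> cf G (A :: D).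
Proof.
  destruct A; simpl; intros HR; try contradiction.
  - apply d_negR; exact HR.
  - destruct HR; apply d_andR; assumption.
  - apply d_orR; exact HR.
  - apply d_impR; exact HR.
  - apply (Der_incl _ _ _ [] [Top]); [apply d_top | solve_incl | solve_incl].
  - destruct HR as [S [HS [Hsc Hd]]]. eapply d_boxR; eauto.
Qed.

Lemma left_intro A G D : left_premises Th SC A G D -> cf (A :: G) D.
Proof.
  destruct A; simpl; intros HL; try contradiction.
  - apply d_negL; exact HL.
  - apply d_andL; exact HL.
  - destruct HL; apply d_orL; assumption.
  - destruct HL; apply d_impL; assumption.
  - apply (Der_incl _ _ _ [Bot] []); [apply d_bot | solve_incl | solve_incl].
  - apply d_boxL; exact HL.
Qed.

Lemma cut_shared B G D G1 D1 G2 D2 : cut_admissible Th SC B ->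
  cf G1 D1 -> cf G2 D2 ->
  incl G1 G -> incl D1 (B :: D) -> incl G2 (B :: G) -> incl D2 D -> cf G D.
Proof.
  intros Hcut H1 H2 HG1 HD1 HG2 HD2.
  assert (H := Hcut G1 D G D2 ltac:(by_struct) ltac:(by_struct)).
  by_struct.
Qed.

Lemma SC_nodup S p : SC (map snd S) p -> SC (map snd (nodup pair_dec S)) p.
Proof.
  rewrite !SC_derivable. intro H.
  apply (Der_incl _ _ _ _ _ _ _ H); [intros y; apply In_map_nodup | apply incl_refl].
Qed.

Lemma principal_reduction A G D Gc Dc :
  (forall B, cut_reduct A B -> cut_admissible Th SC B) ->
  right_premises Th SC A Gc Dc -> left_premises Th SC A G D ->
  incl Gc G -> incl Dc D -> cf G D.
Proof.
  intros IHc HR HL HG HD. destruct A as [n | p | p q | p q | p q | | | p]; simpl in HR, HL; try contradiction.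
  - apply (cut_shared p _ _ _ _ _ _ (IHc p eq_refl) HL HR); solve_incl.
  - destruct HR as [Hp Hq].
    assert (Hpq : cf (p :: G) D)
      by (apply (cut_shared q _ _ _ _ _ _ (IHc _ (or_intror eq_refl)) Hq HL); solve_incl).
    apply (cut_shared p _ _ _ _ _ _ (IHc _ (or_introl eq_refl)) Hp Hpq); solve_incl.
  - destruct HL as [Hp Hq].
    assert (Hq' : cf G (q :: D))
      by (apply (cut_shared p _ _ _ _ _ _ (IHc _ (or_introl eq_refl)) HR Hp); solve_incl).
    apply (cut_shared q _ _ _ _ _ _ (IHc _ (or_intror eq_refl)) Hq' Hq); solve_incl.
  - destruct HL as [Hp Hq].
    assert (Hq' : cf G (q :: D))
      by (apply (cut_shared p _ _ _ _ _ _ (IHc _ (or_introl eq_refl)) Hp HR); solve_incl).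
    apply (cut_shared q _ _ _ _ _ _ (IHc _ (or_intror eq_refl)) Hq' Hq); solve_incl.
  - destruct HR as [S [HS [Hsc Hd]]].
    assert (Hant : cf (bigAnd (map fst S) :: G) D).
    { apply bigAnd_left.
      assert (H := HL (nodup pair_dec S) (NoDup_nodup _ _)
                   (fun r Hr => HS r (proj1 (nodup_In _ _ _) Hr)) (SC_nodup S p Hsc)).
      apply (Der_incl _ _ _ _ _ _ _ H); [| apply incl_refl].
      apply incl_app; [| apply incl_appr, incl_refl].
      apply incl_appl. intros y; apply In_map_nodup. }
    assert (Hbf : boxfree (bigAnd (map fst S))).
    { apply boxfree_bigAnd. intros x Hx. apply in_map_iff in Hx as [r [<- Hr]].
      exact (proj1 (causal _ _ (HS r Hr))). }
    apply (cut_shared _ _ _ _ _ _ _ (IHc _ Hbf) Hd Hant); solve_incl.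
Qed.

Section Reduction.
Variable A : form.
Hypothesis IHc : forall B, cut_reduct A B -> cut_admissible Th SC B.

Section LeftOccurrences.
Variables Gc Dc : list form.
Hypothesis HR : right_premises Th SC A Gc Dc.

Lemma left_case F G D :
  left_premises Th SC F (Gc ++ rm A G) (D ++ Dc) -> cf (Gc ++ rm A (F :: G)) (D ++ Dc).
Proof.
  intro HL. destruct (form_eq_dec F A) as [-> | HFA].
  - assert (H := principal_reduction A _ _ _ _ IHc HR HL
                   ltac:(solve_incl) ltac:(solve_incl)).
    by_struct.
  - assert (H := left_intro F _ _ HL). by_struct.
Qed.

Lemma elim_left_occurrences G D : cf G D -> cf (Gc ++ rm A G) (D ++ Dc).
Proof.
  intro H. induction H; try discriminate; try by_struct.
  - destruct (form_eq_dec p A) as [-> | HpA].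
    + assert (H := right_intro A _ _ HR). by_struct.
    + assert (H := d_ax Th SC false p). by_struct.
  - apply (left_case Bot [] []). exact I.
  - apply right_intro. exact I.
  - apply left_case. by_struct.
  - apply right_intro. by_struct.
  - apply left_case. by_struct.
  - apply right_intro. split; by_struct.
  - apply left_case. split; by_struct.
  - apply right_intro. by_struct.
  - apply left_case. split; by_struct.
  - apply right_intro. by_struct.
  - apply right_intro. exists S. repeat split; auto.
  - apply left_case. intros S Hn Ht Hs.
    specialize (H0 S Hn Ht Hs). by_struct.
Qed.

End LeftOccurrences.

Section RightOccurrences.
Variables G' D' : list form.
Hypothesis HL : cf (A :: G') D'.

Lemma right_case F G D :
  right_premises Th SC F (G ++ G') (rm A D ++ D') -> cf (G ++ G') (rm A (F :: D) ++ D').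
Proof.
  intro HR. destruct (form_eq_dec F A) as [-> | HFA].
  - assert (H := elim_left_occurrences _ _ HR _ _ HL). by_struct.
  - assert (H := right_intro F _ _ HR). by_struct.
Qed.

Lemma elim_right_occurrences G D : cf G D -> cf (G ++ G') (rm A D ++ D').
Proof.
  intro H. induction H; try discriminate; try by_struct.
  - destruct (form_eq_dec p A) as [-> | HpA].
    + by_struct.
    + assert (H := d_ax Th SC false p). by_struct.
  - apply left_intro. exact I.
  - apply (right_case Top [] []). exact I.
  - apply left_intro. by_struct.
  - apply right_case. by_struct.
  - apply left_intro. by_struct.
  - apply right_case. split; by_struct.
  - apply left_intro. split; by_struct.
  - apply right_case. by_struct.
  - apply left_intro. split; by_struct.
  - apply right_case. by_struct.
  - apply right_case. exists S. repeat split; auto. by_struct.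
  - apply left_intro. intros S Hn Ht Hs.
    specialize (H0 S Hn Ht Hs). by_struct.
Qed.

End RightOccurrences.

Lemma cut_step : cut_admissible Th SC A.
Proof.
  intros G D G2 D2 H1 H2.
  assert (H := elim_right_occurrences G2 D2 H2 _ _ H1). by_struct.
Qed.

End Reduction.

Lemma cut_admissible_boxfree A : boxfree A -> cut_admissible Th SC A.
Proof.
  induction A; simpl; intros Hbf; apply cut_step; simpl; intros B HB;
    try contradiction; intuition (subst; auto).
Qed.

Lemma cut_admissible_all A : cut_admissible Th SC A.
Proof.
  induction A; apply cut_step; simpl; intros B HB;
    try contradiction; intuition (subst; auto using cut_admissible_boxfree).
Qed.

(* Multicut reduces to a single cut, since sequents behave as sets. *)
Lemma multicut_admissible G D G' D' p m n :
  cf G (repeat p m ++ D) -> cf (repeat p n ++ G') D' -> cf (G ++ G') (D ++ D').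
Proof.
  intros H1 H2.
  assert (Hrep : forall k x, In x (repeat p k) -> p = x)
    by (intros k x Hx; symmetry; eapply repeat_spec; eauto).
  apply (cut_admissible_all p).
  - apply (Der_incl _ _ _ _ _ _ _ H1); [apply incl_refl |].
    intros x Hx. apply in_app_iff in Hx as [Hx | Hx]; [left | right]; eauto.
  - apply (Der_incl _ _ _ _ _ _ _ H2); [| apply incl_refl].
    intros x Hx. apply in_app_iff in Hx as [Hx | Hx]; [left | right]; eauto.
Qed.

End CutElimination.

Theorem mainTheorem7 :
  forall (Th : causal_theory), is_causal_theory Th ->
  forall (SC : list form -> form -> Prop),
    (forall ps p, SC ps p <-> Der Th SC true ps (p :: nil)) ->
  forall (G D : list form), Der Th SC true G D -> Der Th SC false G D.
Proof.
  intros Th causal SC SC_derivable G D H.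
  induction H; try solve [econstructor; eauto].
  eapply multicut_admissible; eauto.
Qed.
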